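(* Let $w\in\mathcal{W}$ with $\lambda_{\min}(\Sigma_w)=\Lambda_w>0$, and let $\hat w$ be a function on $\mathcal{X}$ with $\mathbb{E}[(w(\boldsymbol{X})-\hat w(\boldsymbol{X}))^2]=\epsilon^2<\Lambda_w^2/\mathbb{E}[\|\boldsymbol{X}\|_2^4]$. Then $$\|\boldsymbol{\beta}_{\hat w}-\boldsymbol{\beta}_w\|_2\le\frac{\epsilon\|\Sigma_w\|_2\|\boldsymbol{\beta}_w\|_2}{\Lambda_w-\epsilon\sqrt{\mathbb{E}[\|\boldsymbol{X}\|_2^4]}}\left(\frac{\sqrt{\mathbb{E}[\|\boldsymbol{X}\|_2^4]}}{\|\Sigma_w\|_2}+\frac{\sqrt{\mathbb{E}[\|\boldsymbol{X}Y\|_2^2]}}{\|\mathbb{E}[w(\boldsymbol{X})\boldsymbol{X}Y]\|_2}\right).$$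
   Context: $\boldsymbol{X}\in\mathbb{R}^d$ features and $Y\in\mathbb{R}$ outcome with training distribution $P^{\text{tr}}$; $\mathcal{X}$ is the support of $\boldsymbol{X}$, $\mathbb{E}$ expectation under $P^{\text{tr}}$. $\mathcal{W}=\{w:\mathcal{X}\to\mathbb{R}^+\mid\mathbb{E}[w(\boldsymbol{X})]=1\}$. For a function $u$ on $\mathcal{X}$, $\Sigma_u=\mathbb{E}[u(\boldsymbol{X})\boldsymbol{X}\boldsymbol{X}^T]$ and $\boldsymbol{\beta}_u=\Sigma_u^{-1}\mathbb{E}[u(\boldsymbol{X})\boldsymbol{X}Y]$. $\lambda_{\min}$ is the smallest eigenvalue, $\|\cdot\|_2$ the spectral norm on matrices. *)

From HB Require Import structures.
From mathcomp Require Import all_boot all_order all_algebra.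
From mathcomp Require Import all_classical all_reals all_analysis.
Set Implicit Arguments. Unset Strict Implicit. Unset Printing Implicit Defensive.
Import Order.TTheory GRing.Theory Num.Theory.
Local Open Scope classical_set_scope.
Local Open Scope ring_scope.

Section Defs.
Context {R : realType} {dm : measure_display} {T : measurableType dm}.

Definition Ex (P : probability T R) (f : T -> R) : R :=
  fine (\int[P]_t (f t)%:E)%E.

Definition Emx (P : probability T R) m n (F : T -> 'M[R]_(m, n)) : 'M[R]_(m, n) :=
  \matrix_(i, j) Ex P (fun t => F t i j).

Definition norm2 d (v : 'cV[R]_d) : R := Num.sqrt (\sum_i (v i 0) ^+ 2).

Definition specnorm d (A : 'M[R]_d) : R :=
  sup [set norm2 (A *m v) | v in [set v : 'cV[R]_d | norm2 v = 1]].

Definition is_lambda_min d (A : 'M[R]_d) (l : R) : Prop :=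
  eigenvalue A l /\ forall a : R, eigenvalue A a -> l <= a.

Definition Sigma (P : probability T R) d (X : T -> 'cV[R]_d) (u : 'cV[R]_d -> R)
  : 'M[R]_d := Emx P (fun t => u (X t) *: (X t *m (X t)^T)).

Definition cross (P : probability T R) d (X : T -> 'cV[R]_d) (Y : T -> R)
  (u : 'cV[R]_d -> R) : 'cV[R]_d := Emx P (fun t => (u (X t) * Y t) *: X t).

Definition beta (P : probability T R) d (X : T -> 'cV[R]_d) (Y : T -> R)
  (u : 'cV[R]_d -> R) : 'cV[R]_d := invmx (Sigma P X u) *m cross P X Y u.

End Defs.

From HB Require Import structures.
From mathcomp Require Import all_boot all_order all_algebra.
From mathcomp Require Import all_classical all_reals all_analysis.
From mathcomp Require Import ring lra measurable_realfun.
Import Order.TTheory GRing.Theory Num.Theory.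
Import numFieldNormedType.Exports.
Local Open Scope classical_set_scope.
Local Open Scope ring_scope.
Set Implicit Arguments. Unset Strict Implicit. Unset Printing Implicit Defensive.

(* Put g := what - w, so that Sigma_what = Sigma_w + Sigma_g and
   E[what(X) X Y] = E[w(X) X Y] + E[g(X) X Y].  Cauchy-Schwarz in L^2(P), with
   E[g(X)^2] = eps^2, bounds the bilinear form of Sigma_g by
   eps sqrt(E||X||^4) |u| |v| and the linear form of E[g(X) X Y] by
   eps sqrt(E||XY||^2) |u|.  Since Lam is the smallest eigenvalue of the
   symmetric matrix Sigma_w, its Rayleigh quotient is at least Lam (the minimum
   of the quadratic form on the unit sphere is attained at an eigenvector), so
   Sigma_what is coercive with constant Lam - eps sqrt(E||X||^4) > 0.  Testing
   Sigma_what (beta_what - beta_w) = E[g(X) X Y] - Sigma_g beta_w against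
   beta_what - beta_w bounds ||beta_what - beta_w||, and
   ||E[w(X) X Y]|| <= ||Sigma_w|| ||beta_w|| puts the bound in the stated form. *)

Lemma quadratic_nonneg_discriminant {R : realFieldType} (a b c : R) : 0 <= c ->
  (forall t, 0 <= a - 2 * t * b + t ^+ 2 * c) -> b ^+ 2 <= a * c.
Proof.
move=> c_ge0 nonneg.
have [c0|c_neq0] := eqVneq c 0.
  move: nonneg; rewrite c0 => nonneg.
  have [->|b_neq0] := eqVneq b 0; first by rewrite expr0n mulr0.
  have := nonneg ((a + 1) / (2 * b)); rewrite mulr0 addr0.
  have -> : 2 * ((a + 1) / (2 * b)) * b = a + 1 by field.
  lra.
have c_gt0 : 0 < c by rewrite lt_def c_neq0.
have := nonneg (b / c).
have -> : a - 2 * (b / c) * b + (b / c) ^+ 2 * c = (a * c - b ^+ 2) / c by field.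
by rewrite pmulr_lge0 ?invr_gt0 // subr_ge0.
Qed.

Section ColumnDot.
Context {R : realFieldType} {d : nat}.
Implicit Types (A : 'M[R]_d) (u v : 'cV[R]_d).

Definition cvdot u v : R := \sum_i u i 0 * v i 0.

Lemma cvdotE u v : cvdot u v = (u^T *m v) 0 0.
Proof. by rewrite mxE; apply: eq_bigr => i _; rewrite mxE. Qed.

Lemma cvdotC u v : cvdot u v = cvdot v u.
Proof. by apply: eq_bigr => i _; rewrite mulrC. Qed.

Lemma cvdot0l v : cvdot 0 v = 0.
Proof. by rewrite /cvdot big1 // => i _; rewrite mxE mul0r. Qed.

Lemma cvdotDr u v1 v2 : cvdot u (v1 + v2) = cvdot u v1 + cvdot u v2.
Proof. by rewrite /cvdot -big_split; apply: eq_bigr => i _; rewrite mxE mulrDr. Qed.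

Lemma cvdotBr u v1 v2 : cvdot u (v1 - v2) = cvdot u v1 - cvdot u v2.
Proof. by rewrite /cvdot -sumrB; apply: eq_bigr => i _; rewrite !mxE mulrBr. Qed.

Lemma cvdotZr u k v : cvdot u (k *: v) = k * cvdot u v.
Proof. by rewrite /cvdot mulr_sumr; apply: eq_bigr => i _; rewrite mxE mulrCA. Qed.

Lemma cvdotDl u1 u2 v : cvdot (u1 + u2) v = cvdot u1 v + cvdot u2 v.
Proof. by rewrite cvdotC cvdotDr !(cvdotC v). Qed.

Lemma cvdotBl u1 u2 v : cvdot (u1 - u2) v = cvdot u1 v - cvdot u2 v.
Proof. by rewrite cvdotC cvdotBr !(cvdotC v). Qed.

Lemma cvdotZl k u v : cvdot (k *: u) v = k * cvdot u v.
Proof. by rewrite cvdotC cvdotZr cvdotC. Qed.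

Lemma cvdot_coord_le u i : u i 0 ^+ 2 <= cvdot u u.
Proof.
rewrite /cvdot (bigD1 i) //= expr2 lerDl.
by apply: sumr_ge0 => j _; rewrite -expr2 sqr_ge0.
Qed.

Lemma cvdot_ge0 u : 0 <= cvdot u u.
Proof. by apply: sumr_ge0 => i _; rewrite -expr2 sqr_ge0. Qed.

Lemma cvdot_eq0 u : (cvdot u u == 0) = (u == 0).
Proof.
apply/idP/eqP => [|->]; last by rewrite cvdot0l.
rewrite psumr_eq0 => [/allP u0|i _]; last by rewrite -expr2 sqr_ge0.
apply/matrixP => i j; rewrite (ord1 j) mxE.
by have /implyP := u0 i (mem_index_enum i); rewrite -expr2 sqrf_eq0 => /(_ isT)/eqP.
Qed.

Lemma cvdot_CauchySchwarz u v : cvdot u v ^+ 2 <= cvdot u u * cvdot v v.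
Proof.
apply: quadratic_nonneg_discriminant => [|t]; first exact: cvdot_ge0.
have := cvdot_ge0 (u - t *: v).
rewrite cvdotBl !cvdotBr !cvdotZl !cvdotZr (cvdotC v u).
by have -> : cvdot u u - t * cvdot u v - (t * cvdot u v - t * (t * cvdot v v)) =
  cvdot u u - 2 * t * cvdot u v + t ^+ 2 * cvdot v v by ring.
Qed.

Lemma cvdot_mulmx_sym A u v : A^T = A -> cvdot u (A *m v) = cvdot v (A *m u).
Proof.
move=> symA; have tr00 (M : 'M[R]_1) : M 0 0 = M^T 0 0 by rewrite mxE.
by rewrite !cvdotE tr00 !trmx_mul trmxK symA mulmxA.
Qed.

End ColumnDot.

Section EuclideanNorm.
Context {R : realType} {d : nat}.
Implicit Types (A : 'M[R]_d) (u v : 'cV[R]_d).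

Lemma norm2E v : norm2 v = Num.sqrt (cvdot v v).
Proof. by rewrite /norm2; congr Num.sqrt; apply: eq_bigr => i _; rewrite expr2. Qed.

Lemma norm2_ge0 v : 0 <= norm2 v.
Proof. by rewrite norm2E sqrtr_ge0. Qed.

Lemma norm2_sq v : norm2 v ^+ 2 = cvdot v v.
Proof. by rewrite norm2E sqr_sqrtr // cvdot_ge0. Qed.

Lemma norm2_gt0 v : (0 < norm2 v) = (v != 0).
Proof. by rewrite norm2E sqrtr_gt0 lt_def cvdot_ge0 andbT cvdot_eq0. Qed.

Lemma norm2Z k v : norm2 (k *: v) = `|k| * norm2 v.
Proof.
rewrite !norm2E cvdotZl cvdotZr mulrA -expr2 sqrtrM ?sqr_ge0 //.
by rewrite sqrtr_sqr.
Qed.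

Lemma norm2_pow4 v : norm2 v ^+ 4 = cvdot v v ^+ 2.
Proof. by rewrite -norm2_sq -exprM. Qed.

Lemma norm2Z_sq k v : norm2 (k *: v) ^+ 2 = k ^+ 2 * cvdot v v.
Proof. by rewrite norm2_sq cvdotZl cvdotZr mulrA expr2. Qed.

Lemma norm2_mulmx_le A v : norm2 (A *m v) <= specnorm A * norm2 v.
Proof.
have [->|v_neq0] := eqVneq v 0; first by rewrite mulmx0 !norm2E cvdot0l sqrtr0 mulr0.
have v_gt0 : 0 < norm2 v by rewrite norm2_gt0.
pose u := (norm2 v)^-1 *: v.
have u_unit : norm2 u = 1 by rewrite norm2Z ger0_norm ?invr_ge0 ?ltW // mulVf ?gt_eqF.
have frobenius x : cvdot (A *m x) (A *m x) <= (\sum_i \sum_j A i j ^+ 2) * cvdot x x.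
  rewrite {1}/cvdot mulr_suml; apply: ler_sum => i _.
  have -> : (A *m x) i 0 = cvdot (\col_j A i j) x.
    by rewrite mxE; apply: eq_bigr => j _; rewrite mxE.
  have -> : \sum_j A i j ^+ 2 = cvdot (\col_j A i j) (\col_j A i j).
    by apply: eq_bigr => j _; rewrite !mxE expr2.
  by rewrite -expr2 cvdot_CauchySchwarz.
have Au_le : norm2 (A *m u) <= specnorm A.
  apply: ub_le_sup; last by exists u.
  exists (Num.sqrt (\sum_i \sum_j A i j ^+ 2)) => _ [x /= x_unit <-].
  rewrite norm2E ler_sqrt; last by do 2 (apply: sumr_ge0 => ? _); exact: sqr_ge0.
  by have := frobenius x; rewrite -(norm2_sq x) x_unit expr1n mulr1.
have -> : A *m v = norm2 v *: (A *m u).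
  by rewrite /u -scalemxAr scalerA mulfV ?gt_eqF // scale1r.
by rewrite norm2Z (ger0_norm (ltW v_gt0)) mulrC ler_pM2r.
Qed.

Lemma coercive_unitmx A k : 0 < k ->
  (forall v, k * cvdot v v <= cvdot v (A *m v)) -> A \in unitmx.
Proof.
move=> k_gt0 coerA; rewrite -unitmx_tr -row_free_unit -kermx_eq0.
apply/rowV0Pn => -[r /sub_kermxP rAT0]; apply/negP; rewrite negbK.
have Av0 : A *m r^T = 0 by rewrite -[A *m _]trmxK trmx_mul trmxK rAT0 trmx0.
have := coerA r^T; rewrite Av0 cvdotC cvdot0l pmulr_rle0 // => r_le0.
have /eqP : cvdot r^T r^T = 0 by apply/eqP; rewrite eq_le r_le0 cvdot_ge0.
by rewrite cvdot_eq0 -trmx0 => /eqP/trmx_inj ->.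
Qed.

Lemma invmx_perturbation_bound (S D : 'M[R]_d) (c e : 'cV[R]_d) (lam a b : R) :
  0 <= a -> a < lam -> 0 <= b ->
  (forall v, lam * cvdot v v <= cvdot v (S *m v)) ->
  (forall u v, `|cvdot u (D *m v)| <= a * (norm2 u * norm2 v)) ->
  (forall u, `|cvdot u e| <= b * norm2 u) ->
  (lam - a) * norm2 (invmx (S + D) *m (c + e) - invmx S *m c)
    <= b + a * norm2 (invmx S *m c).
Proof.
move=> a_ge0 a_lt_lam b_ge0 coerS boundD bounde.
have coerSD v : (lam - a) * cvdot v v <= cvdot v ((S + D) *m v).
  have := boundD v v; rewrite -expr2 norm2_sq ler_norml => /andP[lowD _].
  by have := coerS v; rewrite mulmxDl cvdotDr; lra.
have unitS : S \in unitmx by apply: coercive_unitmx coerS; exact: le_lt_trans a_lt_lam.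
have unitSD : S + D \in unitmx by apply: coercive_unitmx coerSD; rewrite subr_gt0.
set be := invmx S *m c; set De := _ - be.
have SD_De : (S + D) *m De = e - D *m be.
  rewrite mulmxBr mulmxA mulmxV // mul1mx mulmxDl {2}/be mulmxA mulmxV // mul1mx.
  by rewrite opprD addrACA subrr add0r.
have key : (lam - a) * norm2 De ^+ 2 <= norm2 De * (b + a * norm2 be).
  rewrite norm2_sq; apply: le_trans (coerSD De) _; rewrite SD_De cvdotBr.
  have := bounde De; have := boundD De be; rewrite !ler_norml.
  move=> /andP[lowD _] /andP[_ upe]; lra.
have De_ge0 := norm2_ge0 De; have be_ge0 := norm2_ge0 be.
have rhs_ge0 : 0 <= b + a * norm2 be by rewrite addr_ge0 ?mulr_ge0.
have gap_gt0 : 0 < lam - a by rewrite subr_gt0.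
nra.
Qed.

End EuclideanNorm.

Lemma continuous_big_sum {T : topologicalType} {K : numFieldType}
    {V : normedModType K} (I : Type) (s : seq I) (F : I -> T -> V) :
  (forall i, continuous (F i)) -> continuous (fun x => \sum_(i <- s) F i x).
Proof.
move=> Fc; elim: s => [|i s IH].
  by under eq_fun do rewrite big_nil; exact: cst_continuous.
under eq_fun do rewrite big_cons.
by move=> x; exact: continuousD (Fc i x) (IH x).
Qed.

Section RayleighQuotient.
Context {R : realType} {d : nat}.
Implicit Types (A : 'M[R]_d) (v : 'cV[R]_d).

(* The unit sphere lives in ['rV_d] because [bounded_closed_compact] and
   [EVT_min_rV] are stated for row vectors. *)
Lemma continuous_rV_quadratic_form A :
  continuous (fun r : 'rV[R]_d => cvdot r^T (A *m r^T)).
Proof.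
have -> : (fun r : 'rV[R]_d => cvdot r^T (A *m r^T)) =
    (fun r => \sum_i \sum_j r 0 i * A i j * r 0 j).
  apply/funext => r; apply: eq_bigr => i _.
  by rewrite !mxE mulr_sumr; apply: eq_bigr => j _; rewrite !mxE mulrA.
apply: continuous_big_sum => i; apply: continuous_big_sum => j x.
have coord k : continuous (fun r : 'rV[R]_d => r 0 k) := @coord_continuous R 1 d 0 k.
exact: continuousM (continuousM (coord i x) (@cst_continuous _ _ (A i j) x))
  (coord j x).
Qed.

Lemma rV_unit_sphere_compact : compact [set r : 'rV[R]_d | cvdot r^T r^T = 1].
Proof.
apply: bounded_closed_compact; last first.
  apply: (@preimage_closed _ _ (fun r : 'rV[R]_d => cvdot r^T r^T) [set 1]); last first.
    exact: closed_eq.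
  move=> r _; have := @continuous_rV_quadratic_form 1%:M r.
  by under eq_fun do rewrite mul1mx.
rewrite /= /bounded_near; near=> M => r /= r_unit.
rewrite (_ : `|r| = mx_norm r) // mx_normrE.
apply: bigmax_le => [|[i j] _ /=].
  by near: M; apply: nbhs_pinfty_ge; rewrite num_real.
apply: (@le_trans _ _ 1); last by near: M; apply: nbhs_pinfty_ge; rewrite num_real.
rewrite -(@expr_le1 _ 2) // real_normK ?num_real // (ord1 i) -r_unit.
by have := cvdot_coord_le r^T j; rewrite mxE.
Unshelve. all: by end_near.
Qed.

Lemma rayleigh_min_attained A : (0 < d)%N ->
  exists2 c, cvdot c c = 1 &
    forall v, cvdot c (A *m c) * cvdot v v <= cvdot v (A *m v).
Proof.
move=> d_gt0.
pose sphere := [set r : 'rV[R]_d | cvdot r^T r^T = 1].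
have sphere_neq0 : sphere !=set0.
  exists (delta_mx 0 (Ordinal d_gt0)).
  by rewrite /sphere /= cvdotE trmxK trmx_delta mul_delta_mx mxE !eqxx.
have [r r_unit r_min] := EVT_min_rV sphere_neq0 rV_unit_sphere_compact
  (continuous_subspaceT (@continuous_rV_quadratic_form A)).
exists r^T => [|v]; first by move: r_unit; rewrite inE.
have [->|v_neq0] := eqVneq v 0; first by rewrite mulmx0 !cvdot0l mulr0.
have vv_gt0 : 0 < cvdot v v by rewrite -norm2_sq exprn_gt0 // norm2_gt0.
have := r_min ((norm2 v)^-1 *: v^T).
rewrite !inE /sphere /= linearZ /= trmxK -scalemxAr !(cvdotZl, cvdotZr) !mulrA.
rewrite -expr2 exprVn norm2_sq mulVf ?gt_eqF // => /(_ erefl) r_le.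
by rewrite mulrC -ler_pdivlMl.
Qed.

Lemma rayleigh_minimizer_eigenvector A c : A^T = A -> cvdot c c = 1 ->
  (forall v, cvdot c (A *m c) * cvdot v v <= cvdot v (A *m v)) ->
  A *m c = cvdot c (A *m c) *: c.
Proof.
move=> symA c_unit c_min; set m := cvdot c (A *m c).
(* t |-> <c + t u, A (c + t u)> - m |c + t u|^2 is a nonnegative quadratic
   vanishing at t = 0, so its linear coefficient vanishes. *)
have orth u : cvdot u (A *m c) - m * cvdot u c = 0.
  suff : (- (cvdot u (A *m c) - m * cvdot u c)) ^+ 2 <=
      0 * (cvdot u (A *m u) - m * cvdot u u).
    by rewrite mul0r sqrrN => sq_le0; apply/eqP; rewrite -sqrf_eq0 eq_le sq_le0 sqr_ge0.
  apply: quadratic_nonneg_discriminant => [|t]; first by rewrite subr_ge0.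
  have := c_min (c + t *: u); rewrite mulmxDr -scalemxAr.
  rewrite !(cvdotDl, cvdotDr, cvdotZl, cvdotZr) c_unit (cvdot_mulmx_sym c u symA).
  rewrite (cvdotC c u) -/m; lra.
by apply/eqP; rewrite -subr_eq0 -cvdot_eq0 cvdotBr cvdotZr orth.
Qed.

Lemma min_eigenvalue_le_rayleigh A L : A^T = A -> is_lambda_min A L ->
  forall v, L * cvdot v v <= cvdot v (A *m v).
Proof.
move=> symA [_ L_min] v.
have [->|/matrix0Pn[i [_ _]]] := eqVneq v 0; first by rewrite mulmx0 !cvdot0l mulr0.
have [c c_unit c_min] := rayleigh_min_attained A (leq_ltn_trans (leq0n i) (ltn_ord i)).
have Ac := rayleigh_minimizer_eigenvector symA c_unit c_min.
have c_neq0 : c^T != 0 by rewrite trmx_eq0 -cvdot_eq0 c_unit oner_eq0.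
have eig : eigenvalue A (cvdot c (A *m c)).
  apply/eigenvalueP; exists c^T => //.
  by rewrite -[c^T *m A]trmxK trmx_mul trmxK symA {1}Ac linearZ.
by apply: le_trans (c_min v); apply: ler_wpM2r; [exact: cvdot_ge0 | exact: L_min].
Qed.

End RayleighQuotient.

Notation Rintegrable P f := (P.-integrable setT (fun t => (f t)%:E)).

Section Expectation.
Context {R : realType} {dm : measure_display} {T : measurableType dm}.
Variable P : probability T R.
Implicit Types (f g h B : T -> R).

Lemma eq_Rintegrable f g : f =1 g -> Rintegrable P f -> Rintegrable P g.
Proof. by move=> fg; apply: eq_integrable => // t _; rewrite fg. Qed.

Lemma RintegrableD f g : Rintegrable P f -> Rintegrable P g ->
  Rintegrable P (fun t => f t + g t).
Proof.
by move=> fi gi; apply: eq_integrable (integrableD measurableT fi gi) => // t _.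
Qed.

Lemma RintegrableZ k f : Rintegrable P f -> Rintegrable P (fun t => k * f t).
Proof.
by move=> fi; apply: eq_integrable (integrableZl measurableT k fi) => // t _.
Qed.

Lemma Rintegrable_sum (I : Type) (s : seq I) (F : I -> T -> R) :
  (forall i, Rintegrable P (F i)) -> Rintegrable P (fun t => \sum_(i <- s) F i t).
Proof.
move=> Fi; apply: eq_integrable (integrable_sum measurableT _ (fun i _ => Fi i))
  => // t _.
by rewrite sumEFin.
Qed.

Lemma Rintegrable_le f g : measurable_fun setT f -> (forall t, `|f t| <= g t) ->
  Rintegrable P g -> Rintegrable P f.
Proof.
move=> mf fg gi; apply: le_integrable gi => //; first exact/measurable_EFinP.
by move=> t _ /=; rewrite lee_fin (le_trans (fg t)) // ler_norm.
Qed.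

Lemma eq_Ex f g : f =1 g -> Ex P f = Ex P g.
Proof. by move=> fg; congr Ex; apply/funext. Qed.

Lemma ExD f g : Rintegrable P f -> Rintegrable P g ->
  Ex P (fun t => f t + g t) = Ex P f + Ex P g.
Proof. exact: RintegralD. Qed.

Lemma ExZ k f : Rintegrable P f -> Ex P (fun t => k * f t) = k * Ex P f.
Proof. exact: RintegralZl. Qed.

Lemma Ex_sum (I : Type) (s : seq I) (F : I -> T -> R) :
  (forall i, Rintegrable P (F i)) ->
  Ex P (fun t => \sum_(i <- s) F i t) = \sum_(i <- s) Ex P (F i).
Proof.
move=> Fi; elim: s => [|i s IH].
  by rewrite big_nil (eq_Ex (g := fun=> 0)) ?/Ex ?integral0 // => t; rewrite big_nil.
rewrite big_cons (eq_Ex (g := fun t => F i t + \sum_(j <- s) F j t)).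
  by rewrite ExD ?IH //; exact: Rintegrable_sum.
by move=> t; rewrite big_cons.
Qed.

Lemma ler_Ex f g : Rintegrable P f -> Rintegrable P g -> (forall t, f t <= g t) ->
  Ex P f <= Ex P g.
Proof. by move=> fi gi fg; apply: le_Rintegral => // t _. Qed.

Lemma Ex_ge0 f : (forall t, 0 <= f t) -> 0 <= Ex P f.
Proof. by move=> f_ge0; apply: Rintegral_ge0 => t _. Qed.

Lemma Rintegrable_mul_L2 f g : measurable_fun setT f -> measurable_fun setT g ->
  Rintegrable P (fun t => f t ^+ 2) -> Rintegrable P (fun t => g t ^+ 2) ->
  Rintegrable P (fun t => f t * g t).
Proof.
move=> mf mg f2i g2i; apply: Rintegrable_le (RintegrableD f2i g2i).
  exact: measurable_funM.
move=> t; rewrite normrM -[f t ^+ 2]real_normK ?num_real //.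
rewrite -[g t ^+ 2]real_normK ?num_real //.
by have := sqr_ge0 (`|f t| - `|g t|); have := normr_ge0 (f t); have := normr_ge0 (g t); nra.
Qed.

Lemma Ex_mul_CauchySchwarz f g : measurable_fun setT f -> measurable_fun setT g ->
  Rintegrable P (fun t => f t ^+ 2) -> Rintegrable P (fun t => g t ^+ 2) ->
  Ex P (fun t => f t * g t) ^+ 2 <= Ex P (fun t => f t ^+ 2) * Ex P (fun t => g t ^+ 2).
Proof.
move=> mf mg f2i g2i; have fgi := Rintegrable_mul_L2 mf mg f2i g2i.
apply: quadratic_nonneg_discriminant => [|s]; first by apply: Ex_ge0 => t; exact: sqr_ge0.
have -> : Ex P (fun t => f t ^+ 2) - 2 * s * Ex P (fun t => f t * g t) +
    s ^+ 2 * Ex P (fun t => g t ^+ 2) =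
    Ex P (fun t => f t ^+ 2 + (- (2 * s)) * (f t * g t) + s ^+ 2 * g t ^+ 2).
  rewrite ExD ?ExD ?ExZ //; first by rewrite mulNr.
  - exact: RintegrableZ.
  - by apply: RintegrableD => //; exact: RintegrableZ.
  - exact: RintegrableZ.
by apply: Ex_ge0 => t; have := sqr_ge0 (f t - s * g t); lra.
Qed.

Lemma Rintegrable_sqr_le h B k : measurable_fun setT h -> Rintegrable P B ->
  (forall t, h t ^+ 2 <= k * B t) -> Rintegrable P (fun t => h t ^+ 2).
Proof.
move=> mh Bi hB; apply: Rintegrable_le (RintegrableZ k Bi).
  exact: measurable_funX.
by move=> t; rewrite ger0_norm ?sqr_ge0.
Qed.

Lemma abs_Ex_mul_le f h B k : measurable_fun setT f -> measurable_fun setT h ->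
  Rintegrable P (fun t => f t ^+ 2) -> Rintegrable P B ->
  (forall t, h t ^+ 2 <= k * B t) ->
  `|Ex P (fun t => f t * h t)| <=
    Num.sqrt (Ex P (fun t => f t ^+ 2)) * Num.sqrt (k * Ex P B).
Proof.
move=> mf mh f2i Bi hB; have h2i := Rintegrable_sqr_le mh Bi hB.
have Eh2 : Ex P (fun t => h t ^+ 2) <= k * Ex P B.
  by rewrite -ExZ //; apply: ler_Ex => //; exact: RintegrableZ.
have Ef2_ge0 : 0 <= Ex P (fun t => f t ^+ 2) by apply: Ex_ge0 => t; exact: sqr_ge0.
have kB_ge0 : 0 <= k * Ex P B by apply: le_trans Eh2; apply: Ex_ge0 => t; exact: sqr_ge0.
rewrite -sqrtrM // -sqrtr_sqr ler_sqrt; last exact: mulr_ge0.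
by apply: le_trans (Ex_mul_CauchySchwarz mf mh f2i h2i) _; rewrite ler_wpM2l.
Qed.

End Expectation.

Section WeightedMoments.
Context {R : realType} {dm : measure_display} {T : measurableType dm}.
Variables (P : probability T R) (d : nat) (X : T -> 'cV[R]_d) (Y : T -> R).
Implicit Types (g h : 'cV[R]_d -> R) (u v : 'cV[R]_d).

Lemma Sigma_entry g i j :
  Sigma P X g i j = Ex P (fun t => g (X t) * (X t i 0 * X t j 0)).
Proof. by rewrite mxE; apply: eq_Ex => t; rewrite !mxE big_ord1 !mxE. Qed.

Lemma cross_entry g i : cross P X Y g i 0 = Ex P (fun t => g (X t) * Y t * X t i 0).
Proof. by rewrite mxE; apply: eq_Ex => t; rewrite !mxE. Qed.

Lemma Sigma_sym g : (Sigma P X g)^T = Sigma P X g.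
Proof. by apply/matrixP => i j; rewrite mxE !Sigma_entry; apply: eq_Ex => t; ring. Qed.

Lemma SigmaD g h :
  (forall i j, Rintegrable P (fun t => g (X t) * (X t i 0 * X t j 0))) ->
  (forall i j, Rintegrable P (fun t => h (X t) * (X t i 0 * X t j 0))) ->
  Sigma P X (fun x => g x + h x) = Sigma P X g + Sigma P X h.
Proof.
move=> gi hi; apply/matrixP => i j; rewrite Sigma_entry [RHS]mxE.
by rewrite !Sigma_entry -ExD //; apply: eq_Ex => t; rewrite mulrDl.
Qed.

Lemma crossD g h :
  (forall i, Rintegrable P (fun t => g (X t) * Y t * X t i 0)) ->
  (forall i, Rintegrable P (fun t => h (X t) * Y t * X t i 0)) ->
  cross P X Y (fun x => g x + h x) = cross P X Y g + cross P X Y h.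
Proof.
move=> gi hi; apply/matrixP => i j; rewrite (ord1 j) cross_entry [RHS]mxE.
by rewrite !cross_entry -ExD //; apply: eq_Ex => t; rewrite !mulrDl.
Qed.

Hypothesis mX : forall i, measurable_fun setT (fun t => X t i 0).
Hypothesis mY : measurable_fun setT Y.

Lemma measurable_cvdot u : measurable_fun setT (fun t => cvdot u (X t)).
Proof. by apply: measurable_sum => i; exact: measurable_funM (measurable_cst _) (mX i). Qed.

Variable g : 'cV[R]_d -> R.
Hypothesis mg : measurable_fun setT (fun t => g (X t)).
Hypothesis g2_int : Rintegrable P (fun t => g (X t) ^+ 2).

Section FourthMoment.
Hypothesis X4_int : Rintegrable P (fun t => norm2 (X t) ^+ 4).

Lemma Sigma_entry_integrable i j :
  Rintegrable P (fun t => g (X t) * (X t i 0 * X t j 0)).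
Proof.
apply: (Rintegrable_mul_L2 mg _ g2_int); first exact: measurable_funM.
apply: (@Rintegrable_sqr_le _ _ _ _ _ _ 1 _ X4_int); first exact: measurable_funM.
move=> t; rewrite mul1r norm2_pow4 exprMn.
by apply: ler_pM; rewrite ?sqr_ge0 ?cvdot_coord_le.
Qed.

Lemma cvdot_Sigma u v : cvdot u (Sigma P X g *m v) =
  Ex P (fun t => g (X t) * (cvdot u (X t) * cvdot v (X t))).
Proof.
have entry_int i j :
    Rintegrable P (fun t => u i 0 * v j 0 * (g (X t) * (X t i 0 * X t j 0))).
  exact/RintegrableZ/Sigma_entry_integrable.
rewrite (eq_Ex P (g := fun t => \sum_i \sum_j
    u i 0 * v j 0 * (g (X t) * (X t i 0 * X t j 0)))); last first.
  move=> t; rewrite /cvdot mulr_suml mulr_sumr; apply: eq_bigr => i _.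
  by rewrite mulr_sumr !mulr_sumr; apply: eq_bigr => j _; ring.
rewrite Ex_sum => [|i]; last exact: Rintegrable_sum.
apply: eq_bigr => i _; rewrite mxE Ex_sum // mulr_sumr; apply: eq_bigr => j _.
by rewrite Sigma_entry ExZ ?Sigma_entry_integrable //; ring.
Qed.

Lemma Sigma_form_bound u v :
  `|cvdot u (Sigma P X g *m v)| <=
    Num.sqrt (Ex P (fun t => g (X t) ^+ 2)) *
    Num.sqrt (Ex P (fun t => norm2 (X t) ^+ 4)) * (norm2 u * norm2 v).
Proof.
rewrite cvdot_Sigma.
have dom t : (cvdot u (X t) * cvdot v (X t)) ^+ 2 <=
    cvdot u u * cvdot v v * norm2 (X t) ^+ 4.
  rewrite norm2_pow4 exprMn; apply: le_trans (ler_pM (sqr_ge0 _) (sqr_ge0 _)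
    (cvdot_CauchySchwarz u (X t)) (cvdot_CauchySchwarz v (X t))) _.
  by rewrite mulrACA -expr2.
apply: le_trans (abs_Ex_mul_le mg (measurable_funM (measurable_cvdot u)
  (measurable_cvdot v)) g2_int X4_int dom) _.
by rewrite !sqrtrM ?mulr_ge0 ?cvdot_ge0 // -!norm2E [X in _ * X <= _]mulrC mulrA.
Qed.

End FourthMoment.

Section ResponseMoment.
Hypothesis YX2_int : Rintegrable P (fun t => norm2 (Y t *: X t) ^+ 2).

Lemma cross_entry_integrable i : Rintegrable P (fun t => g (X t) * Y t * X t i 0).
Proof.
apply: eq_Rintegrable (fun t => mulrA _ _ _) _.
apply: (Rintegrable_mul_L2 mg _ g2_int); first exact: measurable_funM.
apply: (@Rintegrable_sqr_le _ _ _ _ _ _ 1 _ YX2_int); first exact: measurable_funM.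
move=> t; rewrite mul1r norm2Z_sq exprMn.
by apply: ler_wpM2l; rewrite ?sqr_ge0 ?cvdot_coord_le.
Qed.

Lemma cvdot_cross u :
  cvdot u (cross P X Y g) = Ex P (fun t => g (X t) * (Y t * cvdot u (X t))).
Proof.
rewrite (eq_Ex P (g := fun t => \sum_i u i 0 * (g (X t) * Y t * X t i 0)));
  last first.
  by move=> t; rewrite /cvdot !mulr_sumr; apply: eq_bigr => i _; ring.
rewrite Ex_sum => [|i]; last exact/RintegrableZ/cross_entry_integrable.
by apply: eq_bigr => i _; rewrite cross_entry ExZ // cross_entry_integrable.
Qed.

Lemma cross_form_bound u :
  `|cvdot u (cross P X Y g)| <=
    Num.sqrt (Ex P (fun t => g (X t) ^+ 2)) *
    Num.sqrt (Ex P (fun t => norm2 (Y t *: X t) ^+ 2)) * norm2 u.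
Proof.
rewrite cvdot_cross.
have dom t : (Y t * cvdot u (X t)) ^+ 2 <= cvdot u u * norm2 (Y t *: X t) ^+ 2.
  rewrite norm2Z_sq exprMn [X in _ <= X]mulrCA.
  by rewrite ler_wpM2l ?sqr_ge0 ?cvdot_CauchySchwarz.
apply: le_trans (abs_Ex_mul_le mg (measurable_funM mY (measurable_cvdot u))
  g2_int YX2_int dom) _.
by rewrite -mulrA ler_wpM2l ?sqrtr_ge0 // sqrtrM ?cvdot_ge0 // -norm2E mulrC.
Qed.

End ResponseMoment.

End WeightedMoments.

Lemma mul_sqrt_lt {R : rcfType} (e K L : R) : 0 <= e -> 0 < L ->
  e ^+ 2 < L ^+ 2 / K -> e * Num.sqrt K < L.
Proof.
move=> e_ge0 L_gt0 e_lt; have [K_le0|K_gt0] := lerP K 0.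
  by rewrite ler0_sqrtr // mulr0.
rewrite -(@ltr_pXn2r _ 2) ?nnegrE ?mulr_ge0 ?sqrtr_ge0 ?(ltW L_gt0) //.
by rewrite exprMn sqr_sqrtr ?(ltW K_gt0) // -ltr_pdivlMr.
Qed.

Lemma perturbation_rhs_le {R : realFieldType} (x lam e M N nb s nc : R) :
  0 <= e -> 0 <= M -> 0 <= N -> 0 <= nb -> e * M < lam -> 0 < nc -> nc <= s * nb ->
  (lam - e * M) * x <= e * N + e * M * nb ->
  x <= e * s * nb / (lam - e * M) * (M / s + N / nc).
Proof.
move=> e_ge0 M_ge0 N_ge0 nb_ge0 eM_lt nc_gt0 nc_le x_le.
have gap_gt0 : 0 < lam - e * M by rewrite subr_gt0.
have s_gt0 : 0 < s by have := lt_le_trans nc_gt0 nc_le; nra.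
have -> : e * s * nb / (lam - e * M) * (M / s + N / nc) =
    (e * M * nb + e * N * (s * nb / nc)) / (lam - e * M).
  by field; rewrite !gt_eqF.
have q_ge1 : 1 <= s * nb / nc by rewrite ler_pdivlMr // mul1r.
have := ler_wpM2l (mulr_ge0 e_ge0 N_ge0) q_ge1.
by rewrite ler_pdivlMr // mulrC; lra.
Qed.

Theorem proposition4 (R : realType) (dm : measure_display) (T : measurableType dm)
  (P : probability T R) (d : nat) (X : T -> 'cV[R]_d) (Y : T -> R)
  (w what : 'cV[R]_d -> R) (Lam eps : R) :
  (* measurability of the data *)
  (forall i, measurable_fun setT (fun t => X t i 0)) ->
  measurable_fun setT Y ->
  measurable_fun setT (fun t => w (X t)) ->
  measurable_fun setT (fun t => what (X t)) ->
  (* finiteness of the moments appearing in the statement *)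
  P.-integrable setT (fun t => (norm2 (X t) ^+ 4)%:E) ->
  P.-integrable setT (fun t => (norm2 (Y t *: X t) ^+ 2)%:E) ->
  (forall i j, P.-integrable setT (fun t => (w (X t) * (X t i 0 * X t j 0))%:E)) ->
  (forall i, P.-integrable setT (fun t => (w (X t) * Y t * X t i 0)%:E)) ->
  P.-integrable setT (fun t => ((w (X t) - what (X t)) ^+ 2)%:E) ->
  (* w \in W *)
  (forall t, 0 < w (X t)) ->
  P.-integrable setT (fun t => (w (X t))%:E) ->
  Ex P (fun t => w (X t)) = 1 ->
  (* lambda_min(Sigma_w) = Lam > 0 *)
  is_lambda_min (Sigma P X w) Lam -> 0 < Lam ->
  (* E[w(X) X Y] <> 0, so that the right-hand side is well defined *)
  cross P X Y w != 0 ->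
  (* E[(w - what)^2] = eps^2 < Lam^2 / E||X||^4 *)
  0 <= eps ->
  Ex P (fun t => (w (X t) - what (X t)) ^+ 2) = eps ^+ 2 ->
  eps ^+ 2 < Lam ^+ 2 / Ex P (fun t => norm2 (X t) ^+ 4) ->
  norm2 (beta P X Y what - beta P X Y w) <=
    eps * specnorm (Sigma P X w) * norm2 (beta P X Y w)
      / (Lam - eps * Num.sqrt (Ex P (fun t => norm2 (X t) ^+ 4)))
    * (Num.sqrt (Ex P (fun t => norm2 (X t) ^+ 4)) / specnorm (Sigma P X w)
       + Num.sqrt (Ex P (fun t => norm2 (Y t *: X t) ^+ 2))
         / norm2 (cross P X Y w)).
Proof.
move=> mX mY mw mwhat X4_int YX2_int wXX_int wYX_int dw2_int _ _ _ minS Lam_gt0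
  cw_neq0 eps_ge0 Edw2 eps_lt.
pose g x := what x - w x.
have mg : measurable_fun setT (fun t => g (X t)) by exact: measurable_funB.
have dw2_g t : (w (X t) - what (X t)) ^+ 2 = g (X t) ^+ 2 by rewrite -sqrrN opprB.
have g2_int : Rintegrable P (fun t => g (X t) ^+ 2) by exact: eq_Rintegrable dw2_int.
have Eg : Num.sqrt (Ex P (fun t => g (X t) ^+ 2)) = eps.
  by rewrite -(eq_Ex P dw2_g) Edw2 sqrtr_sqr ger0_norm.
have -> : what = fun x => w x + g x by apply/funext => x; rewrite /g addrC subrK.
rewrite /beta (SigmaD wXX_int (Sigma_entry_integrable mX mg g2_int X4_int)).
rewrite (crossD wYX_int (cross_entry_integrable mX mY mg g2_int YX2_int)).
have lowS := min_eigenvalue_le_rayleigh (Sigma_sym P X w) minS.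
have boundD := Sigma_form_bound mX mg g2_int X4_int; rewrite Eg in boundD.
have bounde := cross_form_bound mX mY mg g2_int YX2_int; rewrite Eg in bounde.
have eM_lt := mul_sqrt_lt eps_ge0 Lam_gt0 eps_lt.
have := invmx_perturbation_bound (cross P X Y w) (mulr_ge0 eps_ge0 (sqrtr_ge0 _))
  eM_lt (mulr_ge0 eps_ge0 (sqrtr_ge0 _)) lowS boundD bounde.
rewrite -/(beta P X Y w) => bound.
apply: perturbation_rhs_le bound; rewrite ?sqrtr_ge0 ?norm2_ge0 ?norm2_gt0 //.
have unitS := coercive_unitmx Lam_gt0 lowS.
by rewrite -{1}[cross P X Y w](mulKVmx unitS) norm2_mulmx_le.
Qed.
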